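(* Let $b\ge 2$ be even and put $c_i=b^{n+i}+1$. If $n=1$ then $F(SC^{+}(b,1))=b^3-1$. If $n\ge 2$ then $\max\mathrm{Ap}(SC^{+}(b,n),c_0)=c_1+(b-1)c_n$ and $$F(SC^{+}(b,n)) = c_1+(b-1)c_n-c_0=(b-1)(b^{2n}+b^{n}+1).$$
   Context: For an even integer $b\ge2$ and $n\ge0$, $SC^{+}(b,n)=\langle\{b^{n+i}+1: i\in\mathbb{N}\}\rangle$ (submonoid of $(\mathbb{N},+)$ generated by these numbers, a numerical semigroup). $\mathrm{Ap}(S,x)=\{s\in S:s-x\notin S\}$; $F(S)$ is the greatest integer not in $S$. *)

From mathcomp Require Import all_boot.
Set Implicit Arguments. Unset Strict Implicit. Unset Printing Implicit Defensive.

Inductive SCplus (b n : nat) : nat -> Prop :=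
  | SC_zero : SCplus b n 0
  | SC_add (i x : nat) : SCplus b n x -> SCplus b n (b ^ (n + i) + 1 + x).

(* Apery set Ap(S,x) = { s in S : s - x notin S } (integer subtraction:
   if s < x then s - x is negative, hence not in S). *)
Definition Apery (S : nat -> Prop) (x s : nat) : Prop :=
  S s /\ (s < x \/ ~ S (s - x)).

Definition IsMax (P : nat -> Prop) (m : nat) : Prop :=
  P m /\ forall s, P s -> s <= m.

Definition IsFrobenius (S : nat -> Prop) (F : nat) : Prop :=
  ~ S F /\ forall m, F < m -> S m.

From mathcomp Require Import all_boot zify.
Set Implicit Arguments. Unset Strict Implicit. Unset Printing Implicit Defensive.

(* Write N = b^n and m = b - 1 (odd). An element of SC^+(b,n) is k + N y where
   y is a sum of exactly k powers of b; then y >= k and y = k (mod m), and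
   conversely splitting powers of b reaches every such k between the minimal
   number of summands and y. The number F = m(N^2 + N + 1) = m + N m(N + 1) is
   not of this form: reducing modulo N and then modulo the odd m forces k = m
   and y = m + mN; but a sum of m < b powers of b congruent to m modulo b
   consists of m ones. Every integer of (F, F + N + 1] has an explicit
   representation, and adding c_0 = N + 1 covers the rest. *)

Definition pow_sum (b : nat) (s : seq nat) : nat := \sum_(e <- s) b ^ e.

Lemma pow_sum_nil b : pow_sum b [::] = 0.
Proof. by rewrite /pow_sum big_nil. Qed.

Lemma pow_sum_cons b e s : pow_sum b (e :: s) = b ^ e + pow_sum b s.
Proof. by rewrite /pow_sum big_cons. Qed.

Lemma pow_sum_cat b s1 s2 : pow_sum b (s1 ++ s2) = pow_sum b s1 + pow_sum b s2.
Proof. by rewrite /pow_sum big_cat. Qed.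

Lemma pow_sum_nseq b k e : pow_sum b (nseq k e) = k * b ^ e.
Proof. by rewrite /pow_sum big_nseq iter_addn_0 mulnC. Qed.

Lemma size_le_pow_sum b s : 0 < b -> size s <= pow_sum b s.
Proof.
move=> b_gt0; elim: s => [|e s IH]; rewrite ?pow_sum_nil ?pow_sum_cons //=.
by rewrite -add1n leq_add ?expn_gt0 ?b_gt0.
Qed.

Lemma expSn_mod m e : m.+1 ^ e = 1 %[mod m].
Proof. by rewrite -[m.+1]addn1 -[m in m + 1]mul1n modnMDXl exp1n. Qed.

Lemma pow_sum_modB1 m s : pow_sum m.+1 s = size s %[mod m].
Proof.
elim: s => [|e s IH]; rewrite ?pow_sum_nil ?pow_sum_cons //=.
by rewrite -modnDm IH expSn_mod modnDm add1n.
Qed.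

Lemma pow_sum_mod_base b s : pow_sum b s = count_mem 0 s %[mod b].
Proof.
elim: s => [|[|e] s IH]; rewrite ?pow_sum_nil ?pow_sum_cons //=.
  by rewrite expn0 -modnDmr IH modnDmr.
by rewrite add0n expnSr -modnDmr IH modnDmr modnMDl.
Qed.

Lemma pow_sum_small_size b s :
  size s < b -> pow_sum b s = size s %[mod b] -> pow_sum b s = size s.
Proof.
move=> lt_sb; rewrite pow_sum_mod_base !modn_small ?(leq_ltn_trans (count_size _ _)) //.
move/eqP; rewrite -all_count => /all_pred1P ->.
by rewrite pow_sum_nseq expn0 muln1 size_nseq.
Qed.

Lemma pow_sum_split b s : 0 < b -> size s < pow_sum b s ->
  exists s', size s' = size s + (b - 1) /\ pow_sum b s' = pow_sum b s.
Proof.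
move=> b_gt0; elim: s => [|e s IH]; rewrite ?pow_sum_nil ?pow_sum_cons //=.
case: (ltnP (size s) (pow_sum b s)) => [lt_s _ | ge_s lt_es].
  have [s' [size_s' sum_s']] := IH lt_s.
  by exists (e :: s'); rewrite pow_sum_cons /= size_s' sum_s'; lia.
have le_s := size_le_pow_sum s b_gt0.
case: e lt_es => [|e] lt_es; first by rewrite expn0 in lt_es; lia.
exists (nseq b e ++ s).
by rewrite size_cat size_nseq pow_sum_cat pow_sum_nseq expnS; lia.
Qed.

Lemma pow_sum_resize b s k : 1 < b -> size s <= k <= pow_sum b s ->
  k = size s %[mod b - 1] ->
  exists s', size s' = k /\ pow_sum b s' = pow_sum b s.
Proof.
move=> b_gt1 /andP[le_sk le_k] /eqP; rewrite eqn_mod_dvd // => /dvdnP[j def_j].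
have def_k : k = size s + (b - 1) * j by lia.
subst k; clear le_sk def_j.
elim: j le_k => [|j IH] le_j; first by exists s; rewrite muln0 addn0.
rewrite mulnS in le_j.
have [|s1 [size_s1 sum_s1]] := IH; first by lia.
have [||s' [size_s' sum_s']] := @pow_sum_split b s1; [lia | lia |].
by exists s'; rewrite size_s' sum_s' size_s1; lia.
Qed.

Lemma SCplusP b n x :
  SCplus b n x <-> exists s, x = size s + b ^ n * pow_sum b s.
Proof.
split.
  elim=> [|i y _ [s ->]]; first by exists [::]; rewrite pow_sum_nil muln0.
  by exists (i :: s); rewrite pow_sum_cons /= mulnDr -expnD; lia.
case=> s ->; elim: s => [|i s IH]; first by rewrite pow_sum_nil muln0; exact: SC_zero.
rewrite pow_sum_cons /= mulnDr -expnD.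
have -> : (size s).+1 + (b ^ (n + i) + b ^ n * pow_sum b s) =
          b ^ (n + i) + 1 + (size s + b ^ n * pow_sum b s) by lia.
exact: SC_add.
Qed.

Lemma max_Apery_Frobenius (S : nat -> Prop) F x :
  0 < x -> IsFrobenius S F -> IsMax (Apery S x) (F + x).
Proof.
move=> x_gt0 [notSF SF]; split.
  by split; [apply: SF; lia | right; rewrite addnK].
move=> s [Ss [lt_sx | notSsx]]; first by lia.
by rewrite leqNgt; apply/negP => lt_s; apply: notSsx; apply: SF; lia.
Qed.

Lemma exists_half_mod m R : odd m -> exists2 t, t < m & m %| R + 2 * t.
Proof.
move=> m_odd; have m_gt0 := odd_gt0 m_odd.
exists (m./2 * R %% m); first exact: ltn_pmod.
have def_m : m = (m./2).*2.+1 by rewrite -[LHS]odd_double_half m_odd add1n.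
rewrite /dvdn -modnDmr modnMmr modnDmr.
have -> : R + 2 * (m./2 * R) = R * m by rewrite [in RHS]def_m -mul2n; nia.
by rewrite modnMl.
Qed.

Section Frobenius.

Variables m n : nat.
Hypotheses (m_odd : odd m) (n_gt0 : 0 < n).

Local Notation b := m.+1.
Local Notation N := (m.+1 ^ n).

Let m_gt0 : 0 < m. Proof. exact: odd_gt0. Qed.

Let m_lt_N : m < N.
Proof. by have := leq_pexp2l (ltn0Sn m) n_gt0; rewrite expn1. Qed.

Lemma frobenius_decomposition k y : k <= y -> y = k %[mod m] ->
  m * (N * N + N + 1) = k + N * y -> k = m /\ y = m * (N + 1).
Proof.
move=> le_ky y_mod def_F.
have {}def_F : m * (N + 1) * N + m = y * N + k by rewrite mulnC; lia.
have mod_k : k %% N = m.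
  by have := congr1 (modn^~ N) def_F; rewrite !modnMDl modn_small.
have div_k : m * (N + 1) = y + k %/ N.
  have := congr1 (divn^~ N) def_F.
  by rewrite !divnMDl ?(divn_small m_lt_N) ?addn0 ?(leq_trans _ m_lt_N).
set t := k %/ N in div_k; have def_k : k = t * N + m by rewrite (divn_eq k N) mod_k.
have t_lt_m : t < m.
  have : t * (N + 1) < m * (N + 1) by lia.
  by rewrite ltn_pmul2r ?addn1.
have dvd_2t : m %| 2 * t.
  have : m * (N + 1) = 2 * t %[mod m].
    rewrite div_k -modnDml y_mod modnDml def_k addnAC modnDr.
    by rewrite -modnDml -modnMmr expSn_mod modnMmr muln1 modnDml addnn -mul2n.
  by rewrite modnMr /dvdn => <-.
have t0 : t = 0.
  move: dvd_2t; rewrite Gauss_dvdr ?coprimen2 // => /dvdn_leq.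
  case: t t_lt_m {def_k div_k} => // t' lt_t'm /(_ isT); lia.
by rewrite t0 in def_k div_k; split; lia.
Qed.

Lemma frobenius_not_SCplus : ~ SCplus b n (m * (N * N + N + 1)).
Proof.
move=> /SCplusP[s def_F].
have [size_s sum_s] := frobenius_decomposition
  (size_le_pow_sum s (ltn0Sn m)) (pow_sum_modB1 m s) def_F.
have [q def_N] : exists q, N = q * b by apply/dvdnP; rewrite dvdn_exp.
have : pow_sum b s = size s.
  apply: pow_sum_small_size; first by rewrite size_s.
  by rewrite sum_s size_s def_N mulnDr muln1 mulnA modnMDl.
rewrite sum_s size_s def_N; nia.
Qed.

Lemma SCplus_window R : m < R <= N + m -> SCplus b n (R + N * (m * (N + 1))).
Proof.
move=> /andP[lt_mR le_R].
have [t lt_tm dvd_2t] := exists_half_mod R m_odd.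
have dvd_t : m %| R + t * (N + 1).
  rewrite /dvdn -modnDmr -modnMmr -[(N + 1) %% m]modnDml expSn_mod modnDml.
  by rewrite modnMmr modnDmr [t * _]mulnC.
have [q def_q] := dvdnP dvd_t.
have le_t : R + t * (N + 1) <= m * (N + 1).
  rewrite leqNgt; apply/negP => lt_t.
  have : N + 1 < q by rewrite -(ltn_pmul2r m_gt0) -def_q mulnC.
  nia.
(* Witness: R + t N summands adding up to (m - t) * 1 + m * N; the choice of t
   gives the summand count the residue modulo m required by [pow_sum_resize]. *)
have le_size : m - t + m <= R + t * N.
  case: t {lt_tm dvd_2t dvd_t le_t} def_q => [|t] def_q; last by nia.
  have : 1 < q by rewrite -(ltn_pmul2r m_gt0) -def_q; lia.
  nia.
have [|||s [size_s sum_s]] :=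
  @pow_sum_resize b (nseq (m - t) 0 ++ nseq m n) (R + t * N).
- by rewrite ltnS.
- by rewrite size_cat pow_sum_cat !size_nseq !pow_sum_nseq expn0 le_size; nia.
- apply/eqP; rewrite size_cat !size_nseq subn1 /= -(eqn_modDr t).
  rewrite (_ : m - t + m + t = m * 2) ?modnMr; last by lia.
  by rewrite -addnA -mulnSr -addn1.
apply/SCplusP; exists s.
by rewrite size_s sum_s pow_sum_cat !pow_sum_nseq expn0; nia.
Qed.

Lemma frobenius_SCplus : IsFrobenius (SCplus b n) (m * (N * N + N + 1)).
Proof.
split; first exact: frobenius_not_SCplus.
have SC_top : SCplus b n (m * (N * N + N + 1) + (N + 1)).
  apply/SCplusP; exists (1 :: nseq m n).
  by rewrite pow_sum_cons pow_sum_nseq /= size_nseq expn1; nia.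
elim/ltn_ind=> x IH lt_x.
case: (ltngtP x (m * (N * N + N + 1) + (N + 1))) => [lt_xtop | gt_xtop | -> //].
  have -> : x = (x - N * (m * (N + 1))) + N * (m * (N + 1)) by nia.
  by apply: SCplus_window; nia.
have -> : x = b ^ (n + 0) + 1 + (x - (N + 1)) by rewrite addn0; lia.
by apply/SC_add/IH; lia.
Qed.

End Frobenius.

Theorem mainTheorem17 (b n : nat) :
  2 <= b -> ~~ odd b ->
  let c := fun i => b ^ (n + i) + 1 in
  (n = 1 -> IsFrobenius (SCplus b 1) (b ^ 3 - 1)) /\
  (2 <= n ->
     IsMax (Apery (SCplus b n) (c 0)) (c 1 + (b - 1) * c n) /\
     IsFrobenius (SCplus b n) (c 1 + (b - 1) * c n - c 0) /\
     c 1 + (b - 1) * c n - c 0 = (b - 1) * (b ^ (2 * n) + b ^ n + 1)).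
Proof.
case: b => [//|m] _ /negPn m_odd c.
split=> [_ | n_ge2].
  have -> : m.+1 ^ 3 - 1 = m * (m.+1 ^ 1 * m.+1 ^ 1 + m.+1 ^ 1 + 1).
    by rewrite !expnS expn0; nia.
  exact: frobenius_SCplus.
have n_gt0 : 0 < n by lia.
rewrite subn1 /=.
have c_top : c 1 + m * c n = m * (m.+1 ^ n * m.+1 ^ n + m.+1 ^ n + 1) + c 0.
  by rewrite /c addn0 !expnD expn1; nia.
rewrite c_top addnK mul2n -addnn expnD.
split; first by apply: max_Apery_Frobenius; [rewrite /c addn1 | exact: frobenius_SCplus].
by split; first exact: frobenius_SCplus.
Qed.
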